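(* For every $k\in\mathbb{N}$, $\mathcal{L}^{(k)}_0$ is a functional Banach space on $T$ containing $\mathcal{P}$ and satisfying: (a) $\mathcal{P}$ is dense in $\mathcal{L}^{(k)}_0$; (b) for each $v\in T$ and each $f\in\mathcal{L}^{(k)}_0$, $p_vf\in\mathcal{L}^{(k)}_0$.
   Context: $T$ is a tree (locally finite, connected, simply connected graph, identified with its vertex set) without terminal vertices, rooted at $o$. $|v|$ is the distance from $o$ to $v$; for $v\ne o$, $v^-$ is the parent of $v$. $T^*=T\setminus\{o\}$, $Df(v)=|f(v)-f(v^-)|$. For $x\ge1$: $\ell_0(x)=1$, $\ell_1(x)=1+\ln x$, $\ell_j(x)=1+\ln\ell_{j-1}(x)$ for $j\ge2$. $\mathcal{L}^{(k)}$ is the space of $f:T\to\mathbb{C}$ with $\sup_{v\in T^*}|v|\prod_{j=0}^{k-1}\ell_j(|v|)Df(v)<\infty$, normed by $\|f\|_k=|f(o)|+\sup_{v\in T^*}|v|\prod_{j=0}^{k-1}\ell_j(|v|)Df(v)$; $\mathcal{L}^{(k)}_0$ is its subspace of $f$ with $\lim_{|v|\to\infty}|v|\prod_{j=0}^{k-1}\ell_j(|v|)Df(v)=0$. A functional Banach space on $T$ is a Banach space of complex functions on $T$ on which every point evaluation $f\mapsto f(v)$ is bounded. For $v\in T$, $S_v$ is the set of $v$ and all its descendants, $p_v=\chi_{S_v}$, and $\mathcal{P}$ is the set of all finite linear combinations $\sum_{i=1}^N a_ip_{v_i}$ with $a_i\in\mathbb{C}$, $v_i\in T$. *)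

From mathcomp Require Import all_boot all_order all_algebra.
From mathcomp Require Import complex.
From mathcomp Require Import all_classical all_reals exp.
Set Implicit Arguments. Unset Strict Implicit. Unset Printing Implicit Defensive.
Import Order.TTheory GRing.Theory Num.Theory.
Local Open Scope ring_scope.
Local Open Scope classical_set_scope.

Definition cmod (R : realType) (z : R[i]) : R := ComplexField.Normc.normc z.

(** * Rooted trees.
   A tree T rooted at o is given by its vertex type V, the root o and the
   parent map par (par v = v^- for v <> o; convention par o = o). *)

Definition child (V : Type) (o : V) (par : V -> V) (u v : V) : Prop :=
  u <> o /\ par u = v.

(** Hypotheses: every vertex reaches o along parents (connected, simply
    connected, rooted at o), locally finite (finitely many children), no
    terminal vertices (every vertex has degree >= 2: the root has at least two
    children, every other vertex has at least one child). *)
Definition rooted_tree (V : Type) (o : V) (par : V -> V) : Prop :=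
  [/\ par o = o,
      (forall v : V, exists n : nat, iter n par v = o),
      (forall v : V, finite_set [set u | child o par u v]),
      (forall v : V, v <> o -> exists u, child o par u v) &
      (exists u1 u2 : V, [/\ u1 <> u2, child o par u1 o & child o par u2 o])].

Definition depth (V : Type) (o : V) (par : V -> V) (v : V) : nat :=
  xget 0%N [set n : nat | iter n par v = o /\
                           (forall m : nat, (m < n)%N -> iter m par v <> o)].

Definition desc (V : Type) (par : V -> V) (v : V) : set V :=
  [set u | exists n : nat, iter n par u = v].

Definition pchar (R : realType) (V : Type) (par : V -> V) (v : V) : V -> R[i] :=
  fun u => if `[< desc par v u >] then 1 else 0.

Definition Pspan (R : realType) (V : Type) (par : V -> V) : set (V -> R[i]) :=
  [set f | exists s : seq (R[i] * V),
     f = fun u => \sum_(x <- s) x.1 * pchar R par x.2 u].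

Fixpoint ell_aux (R : realType) (j : nat) (x : R) : R :=
  match j with
  | 0%N => 1 + ln x
  | j'.+1 => 1 + ln (ell_aux j' x)
  end.
Definition ell (R : realType) (j : nat) (x : R) : R :=
  match j with
  | 0%N => 1
  | j'.+1 => ell_aux j' x
  end.

Definition weight (R : realType) (k n : nat) : R :=
  n%:R * \prod_(j < k) ell j n%:R.

Definition Df (R : realType) (V : Type) (par : V -> V) (f : V -> R[i]) (v : V) : R :=
  cmod (f v - f (par v)).

Definition wDf (R : realType) (V : Type) (o : V) (par : V -> V) (k : nat)
  (f : V -> R[i]) (v : V) : R :=
  weight R k (depth o par v) * Df par f v.

Definition Lk (R : realType) (V : Type) (o : V) (par : V -> V) (k : nat) :
  set (V -> R[i]) :=
  [set f | exists M : R, forall v, v <> o -> wDf o par k f v <= M].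

Definition Lk0 (R : realType) (V : Type) (o : V) (par : V -> V) (k : nat) :
  set (V -> R[i]) :=
  [set f | Lk o par k f /\
     forall eps : R, 0 < eps -> exists N : nat, forall v, v <> o ->
       (N <= depth o par v)%N -> wDf o par k f v <= eps].

Definition normk (R : realType) (V : Type) (o : V) (par : V -> V) (k : nat)
  (f : V -> R[i]) : R :=
  cmod (f o) + sup [set wDf o par k f v | v in [set v | v <> o]].

Definition linear_space (R : realType) (V : Type) (S : set (V -> R[i])) : Prop :=
  [/\ S (fun _ => 0),
      (forall f g, S f -> S g -> S (f \+ g)) &
      (forall (a : R[i]) f, S f -> S (fun u => a * f u))].

Definition is_norm_on (R : realType) (V : Type)
  (S : set (V -> R[i])) (N : (V -> R[i]) -> R) : Prop :=
  [/\ (forall f, S f -> 0 <= N f),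
      (forall f, S f -> N f = 0 -> f = (fun _ => 0)),
      (forall (a : R[i]) f, S f -> N (fun u => a * f u) = cmod a * N f) &
      (forall f g, S f -> S g -> N (f \+ g) <= N f + N g)].

Definition complete_for (R : realType) (V : Type)
  (S : set (V -> R[i])) (N : (V -> R[i]) -> R) : Prop :=
  forall F : nat -> (V -> R[i]), (forall n, S (F n)) ->
    (forall eps : R, 0 < eps -> exists M : nat, forall m n, (M <= m)%N -> (M <= n)%N ->
       N (fun u => F m u - F n u) <= eps) ->
    exists f, S f /\ forall eps : R, 0 < eps -> exists M : nat, forall n, (M <= n)%N ->
       N (fun u => F n u - f u) <= eps.

Definition bounded_evaluations (R : realType) (V : Type)
  (S : set (V -> R[i])) (N : (V -> R[i]) -> R) : Prop :=
  forall v : V, exists C : R, forall f, S f -> cmod (f v) <= C * N f.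

Definition functional_banach (R : realType) (V : Type)
  (S : set (V -> R[i])) (N : (V -> R[i]) -> R) : Prop :=
  [/\ linear_space S, is_norm_on S N, complete_for S N & bounded_evaluations S N].

(* The norm only sees f(o) and the weighted increments
   w(|u|) |f(u) - f(u^-)|, where w(n) = n l_0(n) ... l_(k-1)(n) >= 1 for n >= 1.
   Summing increments along the path from v to o bounds |f(v)| by (|v| + 1) times
   the norm, so evaluations are bounded and a Cauchy sequence has a pointwise
   limit f; since each weighted increment involves only two values, the Cauchy
   estimates pass to the limit, and f inherits the vanishing of the increments at
   infinity from the approximants.  Multiplying by p_v changes no increment except
   the one at v, where p_v jumps.  For density, the telescoping sum
   g = f(o) p_o + sum_{0 < |w| < n} (f(w) - f(w^-)) p_w agrees with f at o and has
   the increments of f inside the ball of radius n and none outside, so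
   ||f - g||_k = sup_{|u| >= n} w(|u|) |f(u) - f(u^-)|, which is small for f in
   L^(k)_0. *)

From mathcomp Require Import all_boot all_order all_algebra.
From mathcomp Require Import complex.
From mathcomp Require Import all_classical all_reals exp.
From mathcomp Require Import topology normedtype sequences.
From mathcomp Require Import ring.
Import Order.TTheory GRing.Theory Num.Theory numFieldNormedType.Exports.
Set Implicit Arguments. Unset Strict Implicit. Unset Printing Implicit Defensive.
Local Open Scope ring_scope.
Local Open Scope classical_set_scope.

Section ComplexModulus.
Variable R : realType.
Implicit Types x y z : R[i].

Lemma cmod_ge0 z : 0 <= cmod z.
Proof. exact: (@normr_ge0 _ (Rcomplex R)). Qed.

Lemma cmod0 : cmod (0 : R[i]) = 0.
Proof. exact: ComplexField.Normc.normc0. Qed.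

Lemma cmod1 : cmod (1 : R[i]) = 1.
Proof. exact: ComplexField.Normc.normc1. Qed.

Lemma cmod_eq0 z : cmod z = 0 -> z = 0.
Proof. exact: ComplexField.Normc.eq0_normc. Qed.

Lemma cmodM x y : cmod (x * y) = cmod x * cmod y.
Proof. exact: ComplexField.Normc.normcM. Qed.

Lemma ler_cmodD x y : cmod (x + y) <= cmod x + cmod y.
Proof. exact: le_normcD. Qed.

Lemma cmodN z : cmod (- z) = cmod z.
Proof. exact: normcN. Qed.

Lemma cmod_distC x y : cmod (x - y) = cmod (y - x).
Proof. by rewrite -cmodN opprB. Qed.

Lemma ler_normRe z : `|complex.Re z| <= cmod z.
Proof.
case: z => a b; rewrite /cmod /= -sqrtr_sqr.
by apply: ler_wsqrtr; rewrite lerDl sqr_ge0.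
Qed.

Lemma ler_normIm z : `|complex.Im z| <= cmod z.
Proof.
case: z => a b; rewrite /cmod /= -sqrtr_sqr.
by apply: ler_wsqrtr; rewrite lerDr sqr_ge0.
Qed.

Lemma cmod_le_ReIm z : cmod z <= `|complex.Re z| + `|complex.Im z|.
Proof.
case: z => a b; rewrite /cmod /=.
rewrite -(ger0_norm (addr_ge0 (normr_ge0 a) (normr_ge0 b))) -sqrtr_sqr.
apply: ler_wsqrtr; rewrite sqrrD !real_normK ?num_real // -addrA addrCA lerDr.
by rewrite mulrn_wge0 // mulr_ge0.
Qed.

Definition cmod_cvg (z : nat -> R[i]) (l : R[i]) :=
  forall e : R, 0 < e -> \forall n \near \oo, cmod (z n - l) <= e.

Lemma real_cauchy_cvg (u : nat -> R) :
  (forall e : R, 0 < e -> exists M, forall m n, (M <= m)%N -> (M <= n)%N ->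
     `|u m - u n| <= e) ->
  cvgn u.
Proof.
move=> uC; apply: cauchy_cvg; apply: cauchy_exP => e e0.
have [M uM] := uC (e / 2) (divr_gt0 e0 (ltr0Sn _ 1)).
exists (u M), M => // n /= Mn; rewrite /ball /=.
apply: le_lt_trans (uM _ _ (leqnn M) Mn) _.
by rewrite ltr_pdivrMr // ltr_pMr // ltr1n.
Qed.

Lemma cmod_cauchy_cvg (z : nat -> R[i]) :
  (forall e : R, 0 < e -> exists M, forall m n, (M <= m)%N -> (M <= n)%N ->
     cmod (z m - z n) <= e) ->
  exists l, cmod_cvg z l.
Proof.
move=> zC.
have /cvgrPdist_le cvRe : cvgn (fun n => complex.Re (z n)).
  apply: real_cauchy_cvg => e /zC[M zM]; exists M => m n Mm Mn.
  by rewrite -raddfB; apply: le_trans (ler_normRe _) (zM m n Mm Mn).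
have /cvgrPdist_le cvIm : cvgn (fun n => complex.Im (z n)).
  apply: real_cauchy_cvg => e /zC[M zM]; exists M => m n Mm Mn.
  by rewrite -raddfB; apply: le_trans (ler_normIm _) (zM m n Mm Mn).
exists (Complex (limn (fun n => complex.Re (z n))) (limn (fun n => complex.Im (z n)))).
move=> e e0.
have e2 : 0 < e / 2 by rewrite divr_gt0.
near=> n; apply: le_trans (cmod_le_ReIm _) _; rewrite [e]splitr.
apply: lerD; rewrite raddfB /= distrC; [near: n; exact: cvRe | near: n; exact: cvIm].
Unshelve. all: by end_near. Qed.

End ComplexModulus.

Section RootedTree.
Variables (V : Type) (o : V) (par : V -> V).
Hypothesis hT : rooted_tree o par.

Lemma iter_par_root n : iter n par o = o.
Proof. by elim: n => //= n ->; case: hT. Qed.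

Lemma iter_par_reach v : exists n, iter n par v = o.
Proof. by case: hT. Qed.

Lemma iter_depth v : iter (depth o par v) par v = o.
Proof.
suff /(xgetPex 0%N) [] : exists n, iter n par v = o /\
    forall m, (m < n)%N -> iter m par v <> o by [].
have [n0 vn0] := iter_par_reach v.
have ex : exists n, `[< iter n par v = o >] by exists n0; apply/asboolP.
case: (ex_minnP ex) => n /asboolP vn nmin; exists n; split=> // m mn vm.
by move: (nmin m (asboolT vm)); rewrite leqNgt mn.
Qed.

Lemma depth_gt0 v : v <> o -> (0 < depth o par v)%N.
Proof.
by move=> vo; rewrite lt0n; apply/eqP => d0; apply: vo; rewrite -(iter_depth v) d0.
Qed.

Lemma exists_nonroot : exists u, u <> o.
Proof. by case: hT => _ _ _ _ [u [_ [_ [uo _] _]]]; exists u. Qed.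

Lemma eq_root_of_par (T : Type) (f : V -> T) :
  (forall u, u <> o -> f u = f (par u)) -> forall u, f u = f o.
Proof.
move=> fpar u; have [n] := iter_par_reach u.
elim: n u => [|n IH] u /= un; first by rewrite un.
have [->//|uo] := pselect (u = o).
by rewrite fpar // IH // -iterSr.
Qed.

Lemma finite_iter_root n :
  finite_set [set w | exists2 j, (j <= n)%N & iter j par w = o].
Proof.
elim: n => [|n IH].
  by apply: sub_finite_set (finite_set1 o) => w [j]; rewrite leqn0 => /eqP ->.
apply: (@sub_finite_set _ _ ([set o] `|` \bigcup_(v in
  [set w | exists2 j, (j <= n)%N & iter j par w = o]) [set u | child o par u v])).
  move=> w [[|j] jn wj]; first by left.
  have [->|wo] := pselect (w = o); first by left.
  by right; exists (par w) => //; exists j => //; rewrite -iterSr.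
rewrite finite_setU; split; first exact: finite_set1.
by apply: bigcup_finite => // v _; case: hT.
Qed.

Lemma finite_depth_lt n : finite_set [set w | (depth o par w < n)%N].
Proof.
apply: sub_finite_set (finite_iter_root n) => w /ltnW wn.
by exists (depth o par w) => //; exact: iter_depth.
Qed.

Lemma desc_refl v : desc par v v.
Proof. by exists 0%N. Qed.

Lemma desc_root u : desc par o u.
Proof. exact: iter_par_reach. Qed.

Lemma desc_par v u : desc par v (par u) -> desc par v u.
Proof. by case=> n un; exists n.+1; rewrite iterSr. Qed.

Lemma desc_par_neq v u : desc par v u -> u <> v -> desc par v (par u).
Proof. by case=> [[|n]] //= un _; exists n; rewrite -iterSr. Qed.

Lemma desc_root_eq v : desc par v o -> v = o.
Proof. by case=> n; rewrite iter_par_root. Qed.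

Lemma not_desc_par v : v <> o -> ~ desc par v (par v).
Proof.
move=> vo [n vn]; have vn1 : iter n.+1 par v = v by rewrite iterSr.
have vcyc j : iter (j * n.+1) par v = v.
  by elim: j => [|j IH] //; rewrite mulSn iterD IH vn1.
have [m vm] := iter_par_reach v; apply: vo.
rewrite -[LHS](vcyc m) -(subnK (leq_pmulr m (ltn0Sn n))) iterD vm.
exact: iter_par_root.
Qed.

End RootedTree.

Section Weight.
Variable R : realType.

Lemma ell_ge1 j (x : R) : 1 <= x -> 1 <= ell j x.
Proof.
case: j => [//|j] x1 /=.
by elim: j => [|j IH] /=; rewrite lerDl ln_ge0.
Qed.

Lemma weight_ge1 k n : (0 < n)%N -> 1 <= weight R k n.
Proof.
move=> n0; have n1 : 1 <= n%:R :> R by rewrite ler1n.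
apply: mulr_ege1 => //; apply: (big_ind (fun x : R => 1 <= x)) => //.
  exact: mulr_ege1.
by move=> j _; exact: ell_ge1.
Qed.

Lemma weight_ge0 k n : 0 <= weight R k n.
Proof.
case: n => [|n]; first by rewrite /weight mul0r.
exact: le_trans ler01 (weight_ge1 k (ltn0Sn n)).
Qed.

End Weight.

Section Indicators.
Variables (R : realType) (V : Type) (o : V) (par : V -> V).
Hypothesis hT : rooted_tree o par.
Local Notation p := (pchar R par).

Lemma cmod_pchar_le1 v u : cmod (p v u) <= 1.
Proof. by rewrite /pchar; case: asboolP => _; rewrite ?cmod1 ?cmod0. Qed.

Lemma pchar_par v u : u <> v -> p v (par u) = p v u.
Proof.
move=> uv; rewrite /pchar.
case: (asboolP (desc par v u)) => [vu|nvu].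
  by rewrite asboolT //; exact: desc_par_neq.
by rewrite asboolF //; apply: contra_not nvu; exact: desc_par.
Qed.

Lemma pchar_root u : p o u = 1.
Proof. by rewrite /pchar asboolT //; exact: desc_root. Qed.

Lemma pchar_at_root v : v <> o -> p v o = 0.
Proof. by move=> vo; rewrite /pchar asboolF // => /(desc_root_eq hT). Qed.

Lemma pchar_jump (v u : {classic V}) : u <> o :> V ->
  p v u - p v (par u) = (v == u)%:R.
Proof.
move=> uo; have [->|vu] := eqVneq v u.
  by rewrite /pchar (asboolT (desc_refl _ _)) (asboolF (not_desc_par hT uo)) subr0.
by rewrite pchar_par ?subrr // => uv; rewrite uv eqxx in vu.
Qed.

Definition pcomb (l : seq (R[i] * V)) : V -> R[i] :=
  fun u => \sum_(x <- l) x.1 * p x.2 u.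

Lemma pcomb_cons x l u : pcomb (x :: l) u = x.1 * p x.2 u + pcomb l u.
Proof. exact: big_cons. Qed.

Lemma pcomb_jump (c : V -> R[i]) (s : seq {classic V}) (u : {classic V}) :
  uniq s -> u <> o :> V ->
  pcomb [seq (c w, w) | w <- s] u - pcomb [seq (c w, w) | w <- s] (par u)
    = if u \in s then c u else 0.
Proof.
move=> s_uniq uo; rewrite /pcomb -sumrB !big_map.
under eq_bigr => w _ do rewrite -mulrBr pchar_jump // mulr_natr mulrb.
case: ifP => us.
  by rewrite (bigD1_seq u) //= eqxx big1 ?addr0 // => w /negbTE ->.
(* [big_map] indexes the sum by [V]; [{classic V}] supplies its equality. *)
rewrite (@big_seq _ _ _ {classic V}) big1 // => w ws; case: eqVneq => // wu.
by rewrite -wu ws in us.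
Qed.

Lemma pcomb_at_root (c : V -> R[i]) (s : seq {classic V}) :
  (forall w : {classic V}, w \in s -> w <> o :> V) ->
  pcomb [seq (c w, w) | w <- s] o = 0.
Proof.
move=> s_nonroot; rewrite /pcomb big_map (@big_seq _ _ _ {classic V}) big1 //.
move=> w ws.
by rewrite pchar_at_root ?mulr0 //; exact: s_nonroot.
Qed.

End Indicators.

Section WeightedVariation.
Variables (R : realType) (V : Type) (o : V) (par : V -> V) (k : nat).
Hypothesis hT : rooted_tree o par.
Implicit Types (f g h : V -> R[i]) (u v : V).

Local Notation wD := (@wDf R V o par k).
Local Notation L := (@Lk R V o par k).
Local Notation L0 := (@Lk0 R V o par k).
Local Notation N := (@normk R V o par k).

Lemma wDf_ge0 f u : 0 <= wD f u.
Proof. by rewrite mulr_ge0 ?weight_ge0 ?cmod_ge0. Qed.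

Lemma Df_le_wDf f u : u <> o -> Df par f u <= wD f u.
Proof. by move=> uo; rewrite ler_peMl ?cmod_ge0 // weight_ge1 // depth_gt0. Qed.

Lemma ler_wDf f g h u :
  f u - f (par u) = (g u - g (par u)) + (h u - h (par u)) ->
  wD f u <= wD g u + wD h u.
Proof.
move=> fE; rewrite -mulrDr; apply: ler_wpM2l; first exact: weight_ge0.
by rewrite /Df fE ler_cmodD.
Qed.

Lemma wDfZ a f u : wD (fun x => a * f x) u = cmod a * wD f u.
Proof. by rewrite /wDf /Df -mulrBr cmodM mulrCA. Qed.

Lemma wDf_distC f g u : wD (fun x => f x - g x) u = wD (fun x => g x - f x) u.
Proof. by rewrite /wDf /Df cmod_distC; congr (_ * cmod _); ring. Qed.

Lemma wDf_cst c u : wD (fun _ => c) u = 0.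
Proof. by rewrite /wDf /Df subrr cmod0 mulr0. Qed.

Lemma wDf_pchar_mul v f u :
  u <> v -> wD (fun x => pchar R par v x * f x) u <= wD f u.
Proof.
move=> uv; rewrite /wDf /Df pchar_par // -mulrBr cmodM.
by apply: ler_wpM2l; rewrite ?weight_ge0 // ler_piMl ?cmod_ge0 ?cmod_pchar_le1.
Qed.

Definition normk_at f u : R := cmod (f o) + wD f u.

Lemma ler_normk_atB f g h u :
  normk_at (fun x => f x - h x) u <=
  normk_at (fun x => f x - g x) u + normk_at (fun x => g x - h x) u.
Proof.
rewrite addrACA lerD //; last by apply: ler_wDf; ring.
by apply: le_trans (ler_cmodD _ _); rewrite addrA subrK.
Qed.

Lemma normk_at_le_pointwise h u e :
  cmod (h o) <= e -> cmod (h u) <= e -> cmod (h (par u)) <= e ->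
  normk_at h u <= (1 + 2 * weight R k (depth o par u)) * e.
Proof.
move=> ho hu hpu; rewrite mulrDl mul1r; apply: lerD => //.
rewrite /wDf -mulrA mulrCA; apply: ler_wpM2l; first exact: weight_ge0.
by rewrite mulr_natl mulr2n; apply: le_trans (ler_cmodD _ _) _; rewrite cmodN lerD.
Qed.

Lemma Lk0_cst c : L0 (fun _ => c).
Proof.
by split=> [|e e0]; [exists 0 | exists 0%N] => v *; rewrite wDf_cst // ltW.
Qed.

Lemma Lk0D f g : L0 f -> L0 g -> L0 (f \+ g).
Proof.
have wDD u : wD (f \+ g) u <= wD f u + wD g u by apply: ler_wDf => /=; ring.
move=> [[Mf fM] f0] [[Mg gM] g0]; split.
  by exists (Mf + Mg) => u uo; apply: le_trans (wDD u) (lerD (fM u uo) (gM u uo)).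
move=> e e0; have e2 : 0 < e / 2 by rewrite divr_gt0.
have [[nf fn] [ng gn]] := (f0 _ e2, g0 _ e2).
exists (maxn nf ng) => u uo; rewrite geq_max => /andP[unf ung].
by apply: le_trans (wDD u) _; rewrite [e]splitr lerD ?fn ?gn.
Qed.

Lemma LkZ a f : L f -> L (fun x => a * f x).
Proof.
move=> [M fM]; exists (cmod a * M) => u uo.
by rewrite wDfZ; apply: ler_wpM2l; rewrite ?cmod_ge0 ?fM.
Qed.

Lemma Lk0Z a f : L0 f -> L0 (fun x => a * f x).
Proof.
move=> [Lf f0]; split; first exact: LkZ.
move=> e e0; have a1 : 0 < cmod a + 1 by rewrite ltr_wpDl ?cmod_ge0.
have [n fn] := f0 _ (divr_gt0 e0 a1); exists n => u uo un.
rewrite wDfZ (le_trans (ler_wpM2l (cmod_ge0 a) (fn u uo un))) //.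
by rewrite mulrCA ler_piMr ?(ltW e0) // ler_pdivrMr // mul1r lerDl.
Qed.

Lemma Lk0B f g : L0 f -> L0 g -> L0 (fun x => f x - g x).
Proof.
move=> Lf /(Lk0Z (-1)) Lg; have := Lk0D Lf Lg.
by congr L0; apply/funext => x /=; rewrite mulN1r.
Qed.

Lemma Lk0_linear : linear_space L0.
Proof. by split; [exact: Lk0_cst | exact: Lk0D | exact: Lk0Z]. Qed.

Lemma Lk0_pchar_mul v f : L0 f -> L0 (fun x => pchar R par v x * f x).
Proof.
move=> [[M fM] f0]; split.
  exists (Num.max M (wD (fun x => pchar R par v x * f x) v)) => u uo.
  have [->|uv] := pselect (u = v); first by rewrite le_max lexx orbT.
  by rewrite le_max (le_trans (wDf_pchar_mul f uv)) ?fM.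
move=> e /f0[n fn]; exists (maxn n (depth o par v).+1) => u uo.
rewrite geq_max => /andP[un vu]; have uv : u <> v by move=> uv; rewrite uv ltnn in vu.
exact: le_trans (wDf_pchar_mul f uv) (fn u uo un).
Qed.

Lemma Lk0_pcomb (l : seq (R[i] * V)) : L0 (pcomb par l).
Proof.
elim: l => [|x l IH].
  by rewrite /pcomb; under eq_fun do rewrite big_nil; exact: Lk0_cst.
rewrite /pcomb; under eq_fun do rewrite big_cons.
apply: Lk0D IH; apply: Lk0Z; have := Lk0_pchar_mul x.2 (Lk0_cst 1).
by congr L0; apply/funext => u; rewrite mulr1.
Qed.

Lemma Lk0_closed f :
  (forall e, 0 < e ->
     exists g, L0 g /\ forall u, u <> o -> wD (fun x => f x - g x) u <= e) ->
  L0 f.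
Proof.
have wDfB g u : wD f u <= wD g u + wD (fun x => f x - g x) u.
  by apply: ler_wDf => /=; ring.
move=> approx; split.
  have [g [[[M gM] _] gf]] := approx 1 ltr01.
  by exists (M + 1) => u uo; rewrite (le_trans (wDfB g u)) ?lerD ?gM ?gf.
move=> e e0; have e2 : 0 < e / 2 by rewrite divr_gt0.
have [g [[_ g0] gf]] := approx _ e2; have [n gn] := g0 _ e2.
by exists n => u uo un; rewrite (le_trans (wDfB g u)) // [e]splitr lerD ?gn ?gf.
Qed.

Lemma normk_le f e : (forall u, u <> o -> normk_at f u <= e) -> N f <= e.
Proof.
move=> fe; rewrite /normk -lerBrDl; apply: ge_sup.
  by have [u uo] := exists_nonroot hT; exists (wD f u), u.
by move=> _ [u uo <-]; rewrite lerBrDl; exact: fe.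
Qed.

Lemma normk_ub f u : L f -> u <> o -> normk_at f u <= N f.
Proof.
move=> [M fM] uo; rewrite lerD2l; apply: sup_upper_bound; last by exists u.
split; first by exists (wD f u), u.
by exists M => _ [v vo <-]; exact: fM.
Qed.

Lemma normk_ge0 f : L f -> 0 <= N f.
Proof.
move=> Lf; have [u uo] := exists_nonroot hT.
by apply: le_trans (normk_ub Lf uo); rewrite addr_ge0 ?cmod_ge0 ?wDf_ge0.
Qed.

Lemma cmod_root_le_normk f : L f -> cmod (f o) <= N f.
Proof.
move=> Lf; have [u uo] := exists_nonroot hT.
by apply: le_trans (normk_ub Lf uo); rewrite lerDl wDf_ge0.
Qed.

Lemma Df_le_normk f u : L f -> u <> o -> Df par f u <= N f.
Proof.
move=> Lf uo; apply: le_trans (normk_ub Lf uo).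
by apply: le_trans (Df_le_wDf f uo) _; rewrite lerDr cmod_ge0.
Qed.

Lemma normk_eq0 f : L f -> N f = 0 -> f = (fun _ => 0).
Proof.
move=> Lf f0; have fo : f o = 0.
  by apply: cmod_eq0; apply/le_anti; rewrite cmod_ge0 -f0 cmod_root_le_normk.
have fpar u : u <> o -> f u = f (par u).
  move=> uo; apply/eqP; rewrite -subr_eq0; apply/eqP/cmod_eq0/le_anti.
  by rewrite cmod_ge0 -f0 andbT Df_le_normk.
by apply/funext => u; rewrite (eq_root_of_par hT fpar).
Qed.

Lemma normkZ a f : L f -> N (fun x => a * f x) = cmod a * N f.
Proof.
move=> Lf; have normk_atZ g u : normk_at (fun x => a * g x) u = cmod a * normk_at g u.
  by rewrite /normk_at wDfZ cmodM mulrDr.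
apply/le_anti/andP; split.
  apply: normk_le => u uo; rewrite normk_atZ.
  by apply: ler_wpM2l; rewrite ?cmod_ge0 ?normk_ub.
have [->|a0] := eqVneq a 0; first by rewrite cmod0 mul0r normk_ge0 //; exact: LkZ.
have a_gt0 : 0 < cmod a.
  by rewrite lt_def cmod_ge0 andbT; apply: contra_neqN a0 => /eqP/cmod_eq0.
rewrite mulrC -ler_pdivlMr //; apply: normk_le => u uo.
by rewrite ler_pdivlMr // mulrC -normk_atZ; apply: normk_ub => //; exact: LkZ.
Qed.

Lemma ler_normkD f g : L f -> L g -> N (f \+ g) <= N f + N g.
Proof.
move=> Lf Lg; apply: normk_le => u uo.
apply: le_trans (lerD (normk_ub Lf uo) (normk_ub Lg uo)).
rewrite /normk_at addrACA; apply: lerD; first exact: ler_cmodD.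
by apply: ler_wDf => /=; ring.
Qed.

Lemma normk_is_norm : is_norm_on L0 N.
Proof.
split=> [f [Lf _]|f [Lf _]|a f [Lf _]|f g [Lf _] [Lg _]].
- exact: normk_ge0.
- exact: normk_eq0.
- exact: normkZ.
- exact: ler_normkD.
Qed.

Lemma cmod_le_normk_iter f v n : L f -> iter n par v = o -> cmod (f v) <= n.+1%:R * N f.
Proof.
move=> Lf; elim: n v => [|n IH] v vn.
  by move: vn => /= ->; rewrite mul1r cmod_root_le_normk.
have [->|vo] := pselect (v = o).
  by rewrite (le_trans (cmod_root_le_normk Lf)) // ler_peMl ?normk_ge0 // ler1n.
rewrite -[f v](subrK (f (par v))) mulrSr mulrDl mul1r addrC.
apply: le_trans (ler_cmodD _ _) _; apply: lerD; last exact: Df_le_normk.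
by apply: IH; rewrite -iterSr.
Qed.

Lemma normk_eval_bound v : exists2 C, 0 < C & forall f, L f -> cmod (f v) <= C * N f.
Proof.
have [n vn] := iter_par_reach hT v.
by exists n.+1%:R => // f Lf; exact: cmod_le_normk_iter.
Qed.

Lemma normk_at_lim (F : nat -> V -> R[i]) f g u e :
  (forall v, cmod_cvg (F^~ v) (f v)) ->
  (\forall m \near \oo, normk_at (fun x => g x - F m x) u <= e) ->
  normk_at (fun x => g x - f x) u <= e.
Proof.
move=> Ff gF; apply/ler_addgt0Pr => d d0.
have w_gt0 : 0 < 1 + 2 * weight R k (depth o par u).
  by rewrite ltr_pwDl // mulr_ge0 ?weight_ge0.
have d'0 : 0 < d / (1 + 2 * weight R k (depth o par u)) by rewrite divr_gt0.
near \oo => m; apply: le_trans (ler_normk_atB g (F m) f u) _.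
apply: lerD; first by near: m.
rewrite -[d](divfK (lt0r_neq0 w_gt0)) mulrC.
by apply: normk_at_le_pointwise; near: m; apply: Ff.
Unshelve. all: by end_near. Qed.

Lemma normk_complete : complete_for L0 N.
Proof.
move=> F LF FC.
have /choice[f Ff] : forall v, exists l, cmod_cvg (F^~ v) l.
  move=> v; apply: cmod_cauchy_cvg => e e0.
  have [C C0 evC] := normk_eval_bound v.
  have [M FM] := FC (e / C) (divr_gt0 e0 C0).
  exists M => m n Mm Mn; have [LFmn _] := Lk0B (LF m) (LF n).
  by apply: le_trans (evC _ LFmn) _; rewrite mulrC -ler_pdivlMr ?FM.
have Ftof e : 0 < e -> exists M, forall n, (M <= n)%N ->
    forall u, u <> o -> normk_at (fun x => F n x - f x) u <= e.
  move=> e0; have [M FM] := FC e e0; exists M => n Mn u uo.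
  apply: normk_at_lim Ff _; near=> m.
  have [LFnm _] := Lk0B (LF n) (LF m).
  apply: le_trans (normk_ub LFnm uo) (FM n m Mn _); near: m; exists M => //.
exists f; split.
  apply: Lk0_closed => e /Ftof[M FM]; exists (F M); split=> // u uo.
  rewrite wDf_distC; apply: le_trans (FM M (leqnn M) u uo).
  by rewrite lerDr cmod_ge0.
by move=> e /Ftof[M FM]; exists M => n Mn; apply: normk_le; exact: FM.
Unshelve. all: by end_near. Qed.

Lemma Pspan_dense f : L0 f -> forall e, 0 < e ->
  exists g, Pspan par g /\ N (fun u => f u - g u) < e.
Proof.
move=> [_ f0] e e0; have e2 : 0 < e / 2 by rewrite divr_gt0.
have [n fn] := f0 _ e2.
pose B : set {classic V} := [set w | w <> o /\ (depth o par w < n)%N].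
have finB : finite_set B.
  by apply: sub_finite_set (finite_depth_lt hT n) => w [].
have [s0 B_s0] := (finite_seqP B).1 finB; pose s := undup s0.
have sB w : w \in s <-> B w by rewrite mem_undup B_s0.
pose c u := f u - f (par u).
pose g := pcomb par ((f o, o) :: [seq (c w, w) | w <- s]).
exists g; split; first by exists ((f o, o) :: [seq (c w, w) | w <- s]).
have g_root : g o = f o.
  by rewrite /g pcomb_cons pchar_root // mulr1 pcomb_at_root ?addr0 // => w /sB[].
have g_jump (u : {classic V}) :
    u <> o -> g u - g (par u) = if u \in s then c u else 0.
  move=> uo; rewrite /g !pcomb_cons !pchar_root // opprD addrACA subrr add0r.
  exact: pcomb_jump (undup_uniq _) uo.
apply: le_lt_trans (_ : e / 2 < e); last by rewrite ltr_pdivrMr // ltr_pMr // ltr1n.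
apply: normk_le => u uo; rewrite /normk_at g_root subrr cmod0 add0r /wDf /Df.
have -> : f u - g u - (f (par u) - g (par u)) = c u - (g u - g (par u)).
  by rewrite /c; ring.
rewrite g_jump //; case: ifPn => [_|/negP us]; first by rewrite subrr cmod0 mulr0 ltW.
rewrite subr0; apply: fn => //; rewrite leqNgt; apply/negP => un.
by apply: us; apply/sB.
Qed.

End WeightedVariation.

Theorem lemma5p4 (R : realType) (V : Type) (o : V) (par : V -> V)
  (hT : rooted_tree o par) (k : nat) :
  [/\ functional_banach (Lk0 (R:=R) o par k) (normk (R:=R) o par k),
      Pspan (R:=R) par `<=` Lk0 (R:=R) o par k,
      (forall f, Lk0 (R:=R) o par k f -> forall eps : R, 0 < eps ->
         exists g, Pspan (R:=R) par g /\ normk (R:=R) o par k (fun u => f u - g u) < eps) &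
      (forall (v : V) f, Lk0 (R:=R) o par k f -> Lk0 (R:=R) o par k (fun u => pchar R par v u * f u))].
Proof.
split.
- split; [exact: Lk0_linear | exact: normk_is_norm | exact: normk_complete |].
  move=> v; have [C _ evC] := normk_eval_bound R k hT v.
  by exists C => f [Lf _]; exact: evC.
- by move=> _ [l ->]; exact: Lk0_pcomb.
- exact: Pspan_dense.
- exact: Lk0_pchar_mul.
Qed.
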